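(* Let $V\in\mathcal C^\infty(\mathbb R^d,\mathbb R)$ and suppose there exist $C>0$ and a compact set $K\subset\mathbb R^d$ such that for all $x\in\mathbb R^d\setminus K$, $$V(x)\ge -C,\qquad |\nabla V(x)|\ge \tfrac1C,\qquad |\Delta V(x)|\le C|\nabla V(x)|^2 .$$ Then there exists $b\in\mathbb R$ such that for all $x\in\mathbb R^d$, $V(x)\ge \frac1C|x|+b$, with $C$ the constant above. *)

From HB Require Import structures.
From mathcomp Require Import all_boot all_order all_algebra.
From mathcomp Require Import all_classical all_reals all_analysis.
Set Implicit Arguments. Unset Strict Implicit. Unset Printing Implicit Defensive.
Import Order.TTheory GRing.Theory Num.Theory.
Import numFieldNormedType.Exports.
Local Open Scope ring_scope.
Local Open Scope classical_set_scope.

(* Euclidean norm on R^d (the library's norm on matrices is the sup norm). *)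
Definition enorm (R : realType) (d : nat) (x : 'rV[R]_d) : R :=
  Num.sqrt (\sum_(i < d) (x ord0 i) ^+ 2).

Definition evec (R : realType) (d : nat) (i : 'I_d) : 'rV[R]_d := delta_mx ord0 i.

Fixpoint iterD (R : realType) (d : nat) (vs : seq 'rV[R]_d)
    (f : 'rV[R]_d -> R) : 'rV[R]_d -> R :=
  match vs with
  | [::] => f
  | v :: vs' => fun x => derive (iterD vs' f) x v
  end.

Definition smooth (R : realType) (d : nat) (f : 'rV[R]_d -> R) : Prop :=
  forall (vs : seq 'rV[R]_d) (x : 'rV[R]_d), differentiable (iterD vs f) x.

Definition grad (R : realType) (d : nat) (f : 'rV[R]_d -> R) (x : 'rV[R]_d)
  : 'rV[R]_d := \row_(i < d) derive f x (@evec R d i).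

Definition laplacian (R : realType) (d : nat) (f : 'rV[R]_d -> R)
    (x : 'rV[R]_d) : R :=
  \sum_(i < d) derive (fun y => derive f y (@evec R d i)) x (@evec R d i).

From HB Require Import structures.
From mathcomp Require Import all_boot all_order all_algebra.
From mathcomp Require Import all_classical all_reals all_analysis.
From mathcomp Require Import ring lra.
Import Order.TTheory GRing.Theory Num.Theory.
Import numFieldNormedType.Exports.
Local Open Scope ring_scope.
Local Open Scope classical_set_scope.

(* Fix 0 < a < 1/C and a point x0.  Since V is bounded below, the coercive
   function z |-> V z + a |z - x0| attains its minimum at some z.  At z the
   gradient has norm at most a, because moving along -grad V z decreases V at
   rate |grad V z|^2 while the penalty grows at rate at most a |grad V z|;
   as a < 1/C, z must lie in K.  Hence
     V x0 >= V z + a |z - x0| >= min_K V + a (|x0| - max_K |.|),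
   and letting a tend to 1/C gives the claim. *)

Section EuclideanNorm.
Context {R : realType} {d : nat}.
Implicit Types x y : 'rV[R]_d.

Lemma sumsq_ge0 x : 0 <= \sum_(i < d) x ord0 i ^+ 2.
Proof. by apply: sumr_ge0 => i _; exact: sqr_ge0. Qed.

Lemma enorm_ge0 x : 0 <= enorm x.
Proof. exact: sqrtr_ge0. Qed.

Lemma sqr_enorm x : enorm x ^+ 2 = \sum_(i < d) x ord0 i ^+ 2.
Proof. by rewrite sqr_sqrtr // sumsq_ge0. Qed.

Lemma enorm0 : enorm (0 : 'rV[R]_d) = 0.
Proof. by rewrite /enorm big1 ?sqrtr0 // => i _; rewrite mxE expr0n. Qed.

Lemma enorm_eq0 x : (enorm x == 0) = (x == 0).
Proof.
apply/idP/eqP => [|->]; last by rewrite enorm0.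
rewrite sqrtr_eq0 => sum_le0; apply/rowP => i; rewrite mxE.
have sum0 : \sum_(i < d) x ord0 i ^+ 2 = 0.
  by apply/eqP; rewrite eq_le sum_le0 sumsq_ge0.
apply/eqP; rewrite -sqrf_eq0.
by rewrite (psumr_eq0P (fun i _ => sqr_ge0 (x ord0 i)) sum0).
Qed.

Lemma enorm_gt0 x : (0 < enorm x) = (x != 0).
Proof. by rewrite lt_def enorm_eq0 enorm_ge0 andbT. Qed.

Lemma enormZ (t : R) x : enorm (t *: x) = `|t| * enorm x.
Proof.
rewrite /enorm -sqrtr_sqr -sqrtrM ?sqr_ge0 // mulr_sumr.
by congr Num.sqrt; apply: eq_bigr => i _; rewrite mxE exprMn.
Qed.

Lemma enormN x : enorm (- x) = enorm x.
Proof. by rewrite -scaleN1r enormZ normrN1 mul1r. Qed.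

Lemma normr_coord_le_enorm x i : `|x ord0 i| <= enorm x.
Proof.
rewrite -ler_sqr ?nnegrE ?enorm_ge0 // sqr_enorm real_normK ?num_real //.
by rewrite (bigD1 i) //= lerDl; apply: sumr_ge0 => j _; exact: sqr_ge0.
Qed.

Lemma dot_le_enorm x y :
  \sum_(i < d) x ord0 i * y ord0 i <= enorm x * enorm y.
Proof.
have [->|x_neq0] := eqVneq x 0.
  by rewrite enorm0 mul0r big1 // => i _; rewrite mxE mul0r.
have [->|y_neq0] := eqVneq y 0.
  by rewrite enorm0 mulr0 big1 // => i _; rewrite mxE mulr0.
have ab_gt0 : 0 < enorm x * enorm y by rewrite mulr_gt0 ?enorm_gt0.
have : 0 <= \sum_(i < d) (enorm y * x ord0 i - enorm x * y ord0 i) ^+ 2.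
  by apply: sumr_ge0 => i _; exact: sqr_ge0.
have -> : \sum_(i < d) (enorm y * x ord0 i - enorm x * y ord0 i) ^+ 2 =
    (enorm x * enorm y)
    * (enorm x * enorm y - \sum_(i < d) x ord0 i * y ord0 i) *+ 2.
  transitivity (\sum_(i < d) (enorm y ^+ 2 * x ord0 i ^+ 2
      + enorm x ^+ 2 * y ord0 i ^+ 2
      - (enorm x * enorm y * (x ord0 i * y ord0 i)) *+ 2)).
    by apply: eq_bigr => i _; ring.
  rewrite sumrB big_split /= sumrMnl -!mulr_sumr -!sqr_enorm; ring.
nra.
Qed.

Lemma enormD x y : enorm (x + y) <= enorm x + enorm y.
Proof.
rewrite -ler_sqr ?nnegrE ?addr_ge0 ?enorm_ge0 // sqrrD !sqr_enorm.
have -> : \sum_(i < d) (x + y) ord0 i ^+ 2 = \sum_(i < d) x ord0 i ^+ 2 +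
    (\sum_(i < d) x ord0 i * y ord0 i) *+ 2 + \sum_(i < d) y ord0 i ^+ 2.
  by rewrite -sumrMnl -!big_split /=; apply: eq_bigr => i _; rewrite mxE; ring.
have := dot_le_enorm x y; lra.
Qed.

Lemma lerB_enorm x y : enorm x - enorm y <= enorm (x - y).
Proof. by have := enormD (x - y) y; rewrite subrK; lra. Qed.

Lemma continuous_enorm : continuous (@enorm R d).
Proof.
move=> x; apply: (continuous_comp _ (@sqrt_continuous R _)).
apply: (continuous_big add_continuous) => i _ y.
apply: (continuous_comp _ (@exprn_continuous R 2 _)).
exact: coord_continuous.
Qed.

End EuclideanNorm.

Lemma derive_lbound_right_quotient (R : realType) (V : normedModType R)
    (f : V -> R) (z v : V) (c : R) :
  derivable f z v ->
  (forall h : R, 0 < h -> c <= h^-1 * (f (h *: v + z) - f z)) ->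
  c <= derive f z v.
Proof.
move=> /cvg_ex[l quot_l] quot_ge.
have -> : derive f z v = l by exact: cvg_lim.
have quot_right :
    (fun h : R => h^-1 *: ((f \o shift z) (h *: v) - f z)) @ 0^'+ --> l.
  move=> A /quot_l /nbhs_ballP [_ /posnumP[e] ballA].
  exists e%:num => //= h h_ball.
  by rewrite lt_def => /andP[h_neq0 _]; apply: ballA.
apply: (cvgr_to_ge quot_right); near=> h; apply: quot_ge.
by near: h; exact: nbhs_right_gt.
Unshelve. all: by end_near.
Qed.

Section Gradient.
Context {R : realType} {d : nat}.
Implicit Types (f : 'rV[R]_d -> R) (z v : 'rV[R]_d).

Lemma derive_gradE f z v : differentiable f z ->
  derive f z v = \sum_(i < d) grad f z ord0 i * v ord0 i.
Proof.
move=> df; rewrite deriveE // {1}[v]row_sum_delta linear_sum /=.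
by apply: eq_bigr => i _; rewrite linearZ /= -deriveE // /grad mxE mulrC.
Qed.

Lemma derive_oppgrad f z : differentiable f z ->
  derive f z (- grad f z) = - enorm (grad f z) ^+ 2.
Proof.
move=> df; rewrite derive_gradE // sqr_enorm -sumrN.
by apply: eq_bigr => i _; rewrite !mxE mulrN expr2.
Qed.

Lemma enorm_grad_le f z (a : R) : differentiable f z -> 0 <= a ->
  (forall w, f z <= f w + a * enorm (w - z)) -> enorm (grad f z) <= a.
Proof.
move=> df a_ge0 slope; set g := grad f z.
have : - (a * enorm g) <= - enorm g ^+ 2.
  rewrite -derive_oppgrad //.
  apply: derive_lbound_right_quotient; first exact: diff_derivable.
  move=> h h_gt0; rewrite ler_pdivlMl //.
  have := slope (h *: - g + z); rewrite addrK enormZ enormN gtr0_norm //; nra.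
have := enorm_ge0 g; nra.
Qed.

End Gradient.

Section CoerciveMinimum.
Context {R : realType} {d : nat}.

Lemma coercive_attains_min (g : 'rV[R]_d -> R) (x0 : 'rV[R]_d) (rho : R) :
  continuous g -> enorm x0 <= rho -> (forall w, rho < enorm w -> g x0 <= g w) ->
  exists z, forall w, g z <= g w.
Proof.
move=> g_cont x0_le g_coercive.
pose box := [set w : 'rV[R]_d | forall i, `[- rho, rho]%classic (w ord0 i)].
have box_compact : compact box.
  exact: (@rV_compact _ d (fun=> `[- rho, rho]%classic)
    (fun=> @segment_compact R (- rho) rho)).
have box_x0 : box x0.
  move=> i /=; rewrite in_itv /= -ler_norml.
  exact: le_trans (normr_coord_le_enorm _ _) x0_le.
have [z _ zmin] := EVT_min_rV (ex_intro _ x0 box_x0) box_compact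
  (continuous_subspaceT g_cont).
exists z => w; have [box_w|/existsNP[i /= w_out]] := pselect (box w).
  by apply: zmin; rewrite inE.
apply: le_trans (g_coercive _ _); first by apply: zmin; rewrite inE.
apply: lt_le_trans (normr_coord_le_enorm w i).
by rewrite ltNge ler_norml; apply: contra_notN w_out; rewrite in_itv.
Qed.

Lemma penalized_attains_min {f : 'rV[R]_d -> R} {m a : R} (x0 : 'rV[R]_d) :
  continuous f -> (forall w, m <= f w) -> 0 < a ->
  exists z, forall w, f z + a * enorm (z - x0) <= f w + a * enorm (w - x0).
Proof.
move=> f_cont f_ge a_gt0.
(* Beyond this radius the penalty alone exceeds [f x0 - m]. *)
apply: (@coercive_attains_min _ x0 (enorm x0 + (f x0 - m) / a)).
- have dist_cont : continuous (fun w : 'rV[R]_d => enorm (w - x0)).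
    move=> w; apply: (continuous_comp (f := fun w : 'rV[R]_d => w - x0)).
      exact: (cvgD cvg_id (cvg_cst (- x0))).
    exact: continuous_enorm.
  move=> w; apply: (@continuousD _ _ _ f (fun w => a * enorm (w - x0))).
    exact: f_cont.
  by apply: (continuous_comp (dist_cont w)); exact: mulrl_continuous.
- by rewrite lerDl divr_ge0 ?subr_ge0 // ltW.
move=> w w_far; rewrite subrr enorm0 mulr0 addr0.
have : f x0 - m < a * (enorm w - enorm x0).
  by rewrite mulrC -ltr_pdivrMr //; lra.
have := lerB_enorm w x0; have := f_ge w; nra.
Qed.

End CoerciveMinimum.

Lemma compact_lbound {T : topologicalType} {R : realType} {f : T -> R}
    {A : set T} :
  compact A -> continuous f -> exists m, forall x, A x -> m <= f x.
Proof.
move=> A_compact f_cont; have [[x0 Ax0]|A0] := pselect (A !=set0).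
  have [c _ cmin] := compact_EVT_min (ex_intro _ x0 Ax0) A_compact
    (continuous_subspaceT f_cont).
  by exists (f c) => x Ax; apply: cmin; rewrite inE.
by exists 0 => x Ax; exfalso; apply: A0; exists x.
Qed.

Lemma ler_mul_of_forall_lt (R : realFieldType) (c D v : R) : 0 < c ->
  (forall a, 0 < a -> a < c -> a * D <= v) -> c * D <= v.
Proof.
move=> c_gt0 le_v.
have v_half : c / 2 * D <= v by apply: le_v; [rewrite divr_gt0 | lra].
have [D_le0|D_gt0] := lerP D 0; first nra.
rewrite -ler_pdivlMr // leNgt; apply/negP => vD_lt.
have vD_gt0 : 0 < v / D by rewrite divr_gt0 //; nra.
have := le_v ((v / D + c) / 2) _ _; rewrite -?ler_pdivlMr //; lra.
Qed.

Section DescentToK.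
Context {R : realType} {d : nat} {V : 'rV[R]_d -> R} {C : R}
  {K : set 'rV[R]_d}.
Hypotheses (V_diff : forall x, differentiable V x)
  (grad_ge : forall x, ~ K x -> C^-1 <= enorm (grad V x)).

Lemma penalized_descent_to_K {m a : R} (x0 : 'rV[R]_d) :
  (forall x, m <= V x) -> 0 < a -> a < C^-1 ->
  exists2 y, K y & V y + a * enorm (y - x0) <= V x0.
Proof.
move=> V_ge a_gt0 a_lt.
have V_cont : continuous V := fun x => differentiable_continuous (V_diff x).
have [z zmin] := penalized_attains_min x0 V_cont V_ge a_gt0.
have := zmin x0; rewrite subrr enorm0 mulr0 addr0 => z_le.
have [Kz|notKz] := pselect (K z); first by exists z.
suff : enorm (grad V z) <= a by have := grad_ge _ notKz; lra.
apply: enorm_grad_le => // [|w]; first exact: ltW.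
have := zmin w; have := enormD (w - z) (z - x0); rewrite addrA subrK; nra.
Qed.

Lemma linear_lbound {m mK r : R} : 0 < C -> (forall x, m <= V x) ->
  (forall y, K y -> mK <= V y) -> (forall y, K y -> enorm y <= r) ->
  forall x, mK + C^-1 * (enorm x - r) <= V x.
Proof.
move=> C_gt0 V_ge V_ge_K K_le x; rewrite addrC -lerBrDr.
apply: ler_mul_of_forall_lt; first by rewrite invr_gt0.
move=> a a_gt0 a_lt.
have [y Ky y_le] := penalized_descent_to_K x V_ge a_gt0 a_lt.
have := lerB_enorm x y; rewrite -[enorm (x - y)]enormN opprB.
have := V_ge_K y Ky; have := K_le y Ky; nra.
Qed.

End DescentToK.

Theorem lemma1 (R : realType) (d : nat) (V : 'rV[R]_d -> R)
  (C : R) (K : set 'rV[R]_d) :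
  smooth V -> 0 < C -> compact K ->
  (forall x, ~ K x ->
     [/\ - C <= V x, C^-1 <= enorm (grad V x)
       & `|laplacian V x| <= C * enorm (grad V x) ^+ 2]) ->
  exists b : R, forall x : 'rV[R]_d, C^-1 * enorm x + b <= V x.
Proof.
move=> V_smooth C_gt0 K_compact V_outside.
have V_diff x : differentiable V x := V_smooth [::] x.
have V_cont : continuous V := fun x => differentiable_continuous (V_diff x).
have [mK V_ge_K] := compact_lbound K_compact V_cont.
have [r K_le] : exists r, forall y, K y -> enorm y <= r.
  have [r le_r] := compact_lbound K_compact
    (fun x => continuousN (@continuous_enorm R d x)).
  by exists (- r) => y /le_r; lra.
have V_ge x : Num.min mK (- C) <= V x.
  rewrite ge_min; have [/V_ge_K ->//|/V_outside[-> _ _]] := pselect (K x).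
  by rewrite orbT.
have grad_ge x : ~ K x -> C^-1 <= enorm (grad V x) by case/V_outside.
exists (mK - C^-1 * r) => x.
have := linear_lbound V_diff grad_ge C_gt0 V_ge V_ge_K K_le x; lra.
Qed.
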